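(* Let $X,Y$ be real Hilbert spaces and $a:X\times Y\to\mathbb{R}\cup\{+\infty\}$ such that for every $y\in Y$ the function $a(\cdot,y)$ is proper, lower semicontinuous and paraconvex on $X$, and for every $x\in X$ the function $a(x,\cdot)$ is concave on $Y$. Assume $\beta:=\inf_{x\in X}\sup_{y\in Y}a(x,y)<+\infty$. If there exist $y_1,y_2\in Y$ and $\bar x\in\mathrm{int}\,\mathrm{dom}\,a(\cdot,y_1)\cap\mathrm{int}\,\mathrm{dom}\,a(\cdot,y_2)$ with $a(\bar x,y_1)\ge\beta$, $a(\bar x,y_2)\ge\beta$ such that $a(\cdot,y_1)$ and $a(\cdot,y_2)$ satisfy $ZS(0,\bar x)$, then $\sup_{y\in Y}\inf_{x\in X}a(x,y)=\inf_{x\in X}\sup_{y\in Y}a(x,y)$.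
   Context: A function $f:X\to\mathbb{R}\cup\{+\infty\}$ is paraconvex if there is $c>0$ such that $f+c\|\cdot\|^2$ is convex; proper means $\mathrm{dom}(f)=\{x:f(x)<+\infty\}\ne\emptyset$ and $f$ is minorized by some function $x\mapsto-a\|x\|^2+\langle v,x\rangle+c$ with $a\ge0$, $v\in X^*$, $c\in\mathbb{R}$. $\partial_{lsc}f(\bar x)$ is the set of $(a,v)\in\mathbb{R}_+\times X^*$ with $f(x)-f(\bar x)\ge\langle v,x-\bar x\rangle-a\|x\|^2+a\|\bar x\|^2$ for all $x\in X$. Functions $f,g$ satisfy $ZS(0,\bar x)$ if $0=(0,0)\in\mathrm{co}(\partial_{lsc}f(\bar x)\cup\partial_{lsc}g(\bar x))$, convex hull in $\mathbb{R}\times X^*$. *)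

From Stdlib Require Import Reals List.
Import ListNotations.
Open Scope R_scope.

Record Hilbert := mkHilbert {
  hcar :> Type;
  hzero : hcar;
  hadd : hcar -> hcar -> hcar;
  hopp : hcar -> hcar;
  hscal : R -> hcar -> hcar;
  hinner : hcar -> hcar -> R;
  hadd_assoc : forall x y z, hadd x (hadd y z) = hadd (hadd x y) z;
  hadd_comm : forall x y, hadd x y = hadd y x;
  hadd_0 : forall x, hadd x hzero = x;
  hadd_opp : forall x, hadd x (hopp x) = hzero;
  hscal_1 : forall x, hscal 1 x = x;
  hscal_assoc : forall a b x, hscal a (hscal b x) = hscal (a * b) x;
  hscal_distr_l : forall a x y, hscal a (hadd x y) = hadd (hscal a x) (hscal a y);
  hscal_distr_r : forall a b x, hscal (a + b) x = hadd (hscal a x) (hscal b x);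
  hinner_sym : forall x y, hinner x y = hinner y x;
  hinner_add : forall x y z, hinner (hadd x y) z = hinner x z + hinner y z;
  hinner_scal : forall a x y, hinner (hscal a x) y = a * hinner x y;
  hinner_pos : forall x, 0 <= hinner x x;
  hinner_def : forall x, hinner x x = 0 -> x = hzero;
  hcomplete : forall u : nat -> hcar,
    (forall eps, 0 < eps -> exists N, forall m n, (N <= m)%nat -> (N <= n)%nat ->
        sqrt (hinner (hadd (u m) (hopp (u n))) (hadd (u m) (hopp (u n)))) < eps) ->
    exists l, forall eps, 0 < eps -> exists N, forall n, (N <= n)%nat ->
        sqrt (hinner (hadd (u n) (hopp l)) (hadd (u n) (hopp l))) < eps
}.

Arguments hzero {_}. Arguments hadd {_}. Arguments hopp {_}.
Arguments hscal {_}. Arguments hinner {_}.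

Definition hsub {X : Hilbert} (x y : X) : X := hadd x (hopp y).
Definition hnorm {X : Hilbert} (x : X) : R := sqrt (hinner x x).

Definition is_dual {X : Hilbert} (v : X -> R) : Prop :=
  (forall x y, v (hadd x y) = v x + v y) /\
  (forall t x, v (hscal t x) = t * v x) /\
  (exists M, forall x, Rabs (v x) <= M * hnorm x).

Inductive ERbar := EFin (r : R) | EPinf | EMinf.

Definition ERle (x y : ERbar) : Prop :=
  match x, y with
  | EMinf, _ => True
  | _, EPinf => True
  | EFin a, EFin b => a <= b
  | _, _ => False
  end.

Definition ERlt (x y : ERbar) : Prop := ERle x y /\ x <> y.

Definition ERplusR (x : ERbar) (r : R) : ERbar :=
  match x with EFin a => EFin (a + r) | e => e end.

Definition is_sup (S : ERbar -> Prop) (l : ERbar) : Prop :=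
  (forall z, S z -> ERle z l) /\
  (forall u, (forall z, S z -> ERle z u) -> ERle l u).

Definition is_inf (S : ERbar -> Prop) (l : ERbar) : Prop :=
  (forall z, S z -> ERle l z) /\
  (forall u, (forall z, S z -> ERle u z) -> ERle u l).

Section Fun.
Context {X : Hilbert}.

Definition dom (f : X -> ERbar) (x : X) : Prop := f x <> EPinf.

(* convexity of an extended-valued function, through its epigraph *)
Definition convex (f : X -> ERbar) : Prop :=
  forall x z t r s, 0 <= t <= 1 -> ERle (f x) (EFin r) -> ERle (f z) (EFin s) ->
    ERle (f (hadd (hscal t x) (hscal (1 - t) z))) (EFin (t * r + (1 - t) * s)).

(* concavity, through the hypograph *)
Definition concave (f : X -> ERbar) : Prop :=
  forall x z t r s, 0 <= t <= 1 -> ERle (EFin r) (f x) -> ERle (EFin s) (f z) ->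
    ERle (EFin (t * r + (1 - t) * s)) (f (hadd (hscal t x) (hscal (1 - t) z))).

Definition paraconvex (f : X -> ERbar) : Prop :=
  exists c, 0 < c /\ convex (fun x => ERplusR (f x) (c * (hnorm x) ^ 2)).

Definition proper (f : X -> ERbar) : Prop :=
  (exists x, dom f x) /\
  (exists (a : R) (v : X -> R) (c : R), 0 <= a /\ is_dual v /\
     forall x, ERle (EFin (- a * (hnorm x) ^ 2 + v x + c)) (f x)).

Definition lsc (f : X -> ERbar) : Prop :=
  forall x r, ERlt (EFin r) (f x) ->
    exists eps, 0 < eps /\ forall z, hnorm (hsub z x) < eps -> ERlt (EFin r) (f z).

Definition in_int_dom (f : X -> ERbar) (x : X) : Prop :=
  exists eps, 0 < eps /\ forall z, hnorm (hsub z x) < eps -> dom f z.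

Definition lsc_subdiff (f : X -> ERbar) (xbar : X) (a : R) (v : X -> R) : Prop :=
  0 <= a /\ is_dual v /\
  exists fx, f xbar = EFin fx /\
    forall x, ERle (EFin (fx + v (hsub x xbar) - a * (hnorm x) ^ 2 + a * (hnorm xbar) ^ 2)) (f x).

(** ZS(0, xbar): (0,0) in the convex hull (finite convex combinations) of
    ∂_lsc f(xbar) ∪ ∂_lsc g(xbar) in R × X^*. *)
Definition ZS (f g : X -> ERbar) (xbar : X) : Prop :=
  exists l : list (R * R * (X -> R)),
    Forall (fun p => let '(lam, a, v) := p in
              0 <= lam /\ (lsc_subdiff f xbar a v \/ lsc_subdiff g xbar a v)) l /\
    fold_right (fun p acc => let '(lam, _, _) := p in lam + acc) 0 l = 1 /\
    fold_right (fun p acc => let '(lam, a, _) := p in lam * a + acc) 0 l = 0 /\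
    forall x, fold_right (fun p acc => let '(lam, _, v) := p in lam * v x + acc) 0 l = 0.

End Fun.

(* Summing the subgradient inequalities of the convex combination given by
   ZS(0, xbar) cancels both the quadratic and the linear parts, so for some
   t in [0,1] the combination t a(., y1) + (1 - t) a(., y2) never drops below
   t a(xbar, y1) + (1 - t) a(xbar, y2) >= beta.  Concavity in y moves this to
   the single point y0 = t y1 + (1 - t) y2: a(., y0) >= beta everywhere, which
   together with weak duality gives the minimax equality. *)
From Stdlib Require Import Reals List Lra.
Open Scope R_scope.

Lemma ERle_trans x y z : ERle x y -> ERle y z -> ERle x z.
Proof. destruct x, y, z; simpl; intros; try lra; tauto. Qed.

Lemma ERle_fin_exists e : e <> EMinf -> exists r, ERle (EFin r) e.
Proof. destruct e; intros H; [exists r | exists 0 | congruence]; simpl; auto; lra. Qed.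

Lemma hnorm_sub_self (X : Hilbert) (x : X) : hnorm (hsub x x) = 0.
Proof.
  unfold hnorm, hsub. rewrite hadd_opp.
  assert (H := hinner_add X hzero hzero hzero). rewrite hadd_0 in H.
  replace (hinner (@hzero X) hzero) with 0 by lra. apply sqrt_0.
Qed.

Lemma in_int_dom_fin (X : Hilbert) (f : X -> ERbar) (x : X) :
  in_int_dom f x -> f x <> EMinf -> exists p, f x = EFin p.
Proof.
  intros [e [He Hdom]] Hfin.
  assert (Hx : dom f x) by (apply Hdom; rewrite hnorm_sub_self; lra).
  unfold dom in Hx. destruct (f x); [eauto | congruence | congruence].
Qed.

Lemma merge_lower_bounds (e : ERbar) (L lam p r d c : R) :
  0 <= L -> 0 <= lam -> ERle (EFin r) e -> ERle (EFin (p + d)) e ->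
  c <= L * (r - p) ->
  exists r', ERle (EFin r') e /\ c + lam * d <= (L + lam) * (r' - p).
Proof.
  intros HL Hlam Hr Hd Hc. exists (Rmax r (p + d)). split.
  - unfold Rmax; destruct Rle_dec; assumption.
  - assert (Hl := Rmax_l r (p + d)). assert (Hm := Rmax_r r (p + d)).
    assert (0 <= L * (Rmax r (p + d) - r)) by (apply Rmult_le_pos; lra).
    assert (0 <= lam * (Rmax r (p + d) - p - d)) by (apply Rmult_le_pos; lra).
    lra.
Qed.

Section ZeroSubdifferentialCondition.

Context {X : Hilbert}.

Definition lsc_increment (xbar x : X) (a : R) (v : X -> R) : R :=
  v (hsub x xbar) - a * (hnorm x ^ 2 - hnorm xbar ^ 2).

Lemma lsc_subdiff_minorant (f : X -> ERbar) (xbar : X) a v fx :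
  lsc_subdiff f xbar a v -> f xbar = EFin fx ->
  forall x, ERle (EFin (fx + lsc_increment xbar x a v)) (f x).
Proof.
  intros (_ & _ & fx' & Hfx' & Hmin) Hfx x. rewrite Hfx in Hfx'.
  injection Hfx' as <-. unfold lsc_increment.
  replace (fx + (v (hsub x xbar) - a * (hnorm x ^ 2 - hnorm xbar ^ 2)))
    with (fx + v (hsub x xbar) - a * hnorm x ^ 2 + a * hnorm xbar ^ 2) by ring.
  apply Hmin.
Qed.

Lemma sum_lsc_increment (xbar x : X) (l : list (R * R * (X -> R))) :
  fold_right (fun p acc => let '(lam, a, v) := p in
                lam * lsc_increment xbar x a v + acc) 0 l =
  fold_right (fun p acc => let '(lam, _, v) := p in lam * v (hsub x xbar) + acc) 0 l
  - fold_right (fun p acc => let '(lam, a, _) := p in lam * a + acc) 0 l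
    * (hnorm x ^ 2 - hnorm xbar ^ 2).
Proof.
  unfold lsc_increment.
  induction l as [|[[lam a] v] l IH]; cbn [fold_right]; [|rewrite IH]; ring.
Qed.

Variables (F G : X -> ERbar) (xbar : X) (p q : R).
Hypotheses (HF : forall x, F x <> EMinf) (HG : forall x, G x <> EMinf).
Hypotheses (Fp : F xbar = EFin p) (Gq : G xbar = EFin q).

Lemma weighted_lsc_minorants (l : list (R * R * (X -> R))) :
  Forall (fun pr => let '(lam, a, v) := pr in
            0 <= lam /\ (lsc_subdiff F xbar a v \/ lsc_subdiff G xbar a v)) l ->
  exists L1 L2, 0 <= L1 /\ 0 <= L2 /\
    L1 + L2 = fold_right (fun pr acc => let '(lam, _, _) := pr in lam + acc) 0 l /\
    forall x, exists r s, ERle (EFin r) (F x) /\ ERle (EFin s) (G x) /\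
      fold_right (fun pr acc => let '(lam, a, v) := pr in
                    lam * lsc_increment xbar x a v + acc) 0 l
      <= L1 * (r - p) + L2 * (s - q).
Proof.
  induction l as [|[[lam a] v] l IH]; intros Hl.
  - exists 0, 0. do 3 (split; [simpl; lra|]). intros x.
    destruct (ERle_fin_exists _ (HF x)) as [r Hr].
    destruct (ERle_fin_exists _ (HG x)) as [s Hs].
    exists r, s. repeat split; trivial. simpl; lra.
  - inversion Hl as [| ? ? Hhd Htl]; subst. destruct Hhd as [Hlam Hsub].
    destruct (IH Htl) as (L1 & L2 & HL1 & HL2 & Hsum & Hmin). cbn [fold_right].
    destruct Hsub as [HsubF | HsubG].
    + exists (L1 + lam), L2. do 3 (split; [lra|]). intros x.
      destruct (Hmin x) as (r & s & Hr & Hs & Hle).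
      destruct (merge_lower_bounds (F x) L1 lam p r (lsc_increment xbar x a v)
                  (L1 * (r - p)) HL1 Hlam Hr
                  (lsc_subdiff_minorant F xbar a v p HsubF Fp x) (Rle_refl _))
        as (r' & Hr' & Hle').
      exists r', s. repeat split; trivial. lra.
    + exists L1, (L2 + lam). do 3 (split; [lra|]). intros x.
      destruct (Hmin x) as (r & s & Hr & Hs & Hle).
      destruct (merge_lower_bounds (G x) L2 lam q s (lsc_increment xbar x a v)
                  (L2 * (s - q)) HL2 Hlam Hs
                  (lsc_subdiff_minorant G xbar a v q HsubG Gq x) (Rle_refl _))
        as (s' & Hs' & Hle').
      exists r, s'. repeat split; trivial. lra.
Qed.

Lemma ZS_convex_minorant :
  ZS F G xbar ->
  exists t, 0 <= t <= 1 /\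
    forall x, exists r s, ERle (EFin r) (F x) /\ ERle (EFin s) (G x) /\
      t * p + (1 - t) * q <= t * r + (1 - t) * s.
Proof.
  intros (l & Hl & Hlam & Ha & Hv).
  destruct (weighted_lsc_minorants l Hl) as (L1 & L2 & HL1 & HL2 & Hsum & Hmin).
  exists L1. split; [lra|]. intros x.
  destruct (Hmin x) as (r & s & Hr & Hs & Hle).
  rewrite sum_lsc_increment, Hv, Ha in Hle.
  exists r, s. repeat split; trivial. replace (1 - L1) with L2 by lra. lra.
Qed.

End ZeroSubdifferentialCondition.

Section Minimax.

Variables (X Y : Hilbert) (a : X -> Y -> ERbar) (beta : ERbar).
Hypothesis Hbeta :
  is_inf (fun z => exists x : X, is_sup (fun w => exists y : Y, w = a x y) z) beta.

Lemma inf_le_inf_sup (y : Y) (z : ERbar) :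
  is_inf (fun w => exists x, w = a x y) z -> ERle z beta.
Proof.
  intros [Hz _]. apply (proj2 Hbeta). intros s [x [Hs _]].
  apply ERle_trans with (a x y).
  - apply Hz. exists x; reflexivity.
  - apply Hs. exists y; reflexivity.
Qed.

Lemma minimax_of_uniform_lower_bound (y0 : Y) :
  (forall x, ERle beta (a x y0)) ->
  is_sup (fun z => exists y : Y, is_inf (fun w => exists x : X, w = a x y) z) beta.
Proof.
  intros Hy0.
  assert (Hinf0 : is_inf (fun w => exists x, w = a x y0) beta).
  { split.
    - intros w [x ->]. apply Hy0.
    - intros u Hu. apply (proj2 Hbeta). intros s [x [Hs _]].
      apply ERle_trans with (a x y0).
      + apply Hu. exists x; reflexivity.
      + apply Hs. exists y0; reflexivity. }
  split.
  - intros z [y Hz]. exact (inf_le_inf_sup y z Hz).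
  - intros u Hu. apply Hu. exists y0. exact Hinf0.
Qed.

End Minimax.

Theorem mainTheorem16 (X Y : Hilbert) (a : X -> Y -> ERbar)
  (Ha_val : forall x y, a x y <> EMinf)
  (Hproper : forall y, proper (fun x => a x y))
  (Hlsc : forall y, lsc (fun x => a x y))
  (Hpara : forall y, paraconvex (fun x => a x y))
  (Hconc : forall x, concave (fun y => a x y))
  (beta : ERbar)
  (Hbeta : is_inf (fun z => exists x : X, is_sup (fun w => exists y : Y, w = a x y) z) beta)
  (Hbeta_fin : beta <> EPinf)
  (y1 y2 : Y) (xbar : X)
  (Hint1 : in_int_dom (fun x => a x y1) xbar)
  (Hint2 : in_int_dom (fun x => a x y2) xbar)
  (Hge1 : ERle beta (a xbar y1))
  (Hge2 : ERle beta (a xbar y2))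
  (HZS : ZS (fun x => a x y1) (fun x => a x y2) xbar) :
  is_sup (fun z => exists y : Y, is_inf (fun w => exists x : X, w = a x y) z) beta.
Proof.
  destruct (in_int_dom_fin _ _ _ Hint1 (Ha_val xbar y1)) as [p Hp].
  destruct (in_int_dom_fin _ _ _ Hint2 (Ha_val xbar y2)) as [q Hq].
  destruct (ZS_convex_minorant _ _ xbar p q (fun x => Ha_val x y1)
              (fun x => Ha_val x y2) Hp Hq HZS) as (t & Ht & Hmin).
  apply (minimax_of_uniform_lower_bound X Y a beta Hbeta
           (hadd (hscal t y1) (hscal (1 - t) y2))).
  intros x. destruct (Hmin x) as (r & s & Hr & Hs & Hle).
  apply ERle_trans with (EFin (t * r + (1 - t) * s)); [|exact (Hconc x y1 y2 t r s Ht Hr Hs)].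
  rewrite Hp in Hge1. rewrite Hq in Hge2.
  destruct beta as [b| |]; simpl in *; [|congruence|exact I].
  assert (t * b <= t * p) by (apply Rmult_le_compat_l; lra).
  assert ((1 - t) * b <= (1 - t) * q) by (apply Rmult_le_compat_l; lra).
  lra.
Qed.
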